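(* Let $m$ be a positive integer, $S\subseteq\mathbb{F}_2^m$ and $\epsilon\in(0,1/2)$, and let $d=\dim(S)$. Then $\langle\mathcal{X}_{\overline{S}}^4\rangle\le 2^{2dm+8d^2}\big(1/(\epsilon(1-\epsilon))\big)^{2^d}$.
   Context: For $g:\{0,1\}^{\mathbb{F}_2^m}\to\mathbb{R}$, $\langle g\rangle=\sum_{z}\epsilon^{|z|}(1-\epsilon)^{2^m-|z|}g(z)$, the expectation under the product Bernoulli$(\epsilon)$ measure ($|z|$ is the Hamming weight). For $S\subseteq\mathbb{F}_2^m$, $\mathcal{X}_S(z)=\left(\frac{\epsilon}{1-\epsilon}\right)^{|S|/2}\left(-\frac{1-\epsilon}{\epsilon}\right)^{|\{x\in S:z_x=1\}|}$. $\dim(S)$ is the dimension of the linear span of $S$ in $\mathbb{F}_2^m$. $\overline{S}$ is the set of distinct images $\pi(S)$ of $S$ under invertible linear maps $\pi$ of $\mathbb{F}_2^m$, and $\mathcal{X}_{\overline{S}}=\sum_{S'\in\overline{S}}\mathcal{X}_{S'}$. *)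

From HB Require Import structures.
From mathcomp Require Import all_boot all_order all_algebra all_fingroup.
Set Implicit Arguments. Unset Strict Implicit. Unset Printing Implicit Defensive.
Import Order.TTheory GRing.Theory Num.Theory.
Local Open Scope ring_scope.

(* F_2^m is the row space 'rV['F_2]_m; a configuration z : {0,1}^{F_2^m}
   is a boolean finite function on it. *)
Notation vec m := ('rV['F_2]_m).
Notation config m := {ffun vec m -> bool}.

Definition hweight (m : nat) (z : config m) : nat := #|[set x | z x]|.

Definition bexp (R : rcfType) (m : nat) (eps : R) (g : config m -> R) : R :=
  \sum_(z : config m)
     eps ^+ hweight z * (1 - eps) ^+ (2 ^ m - hweight z)%N * g z.

Definition chiS (R : rcfType) (m : nat) (eps : R) (S : {set vec m})
    (z : config m) : R :=
  Num.sqrt (eps / (1 - eps)) ^+ #|S|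
  * (- ((1 - eps) / eps)) ^+ #|[set x in S | z x]|.

Definition dimS (m : nat) (S : {set vec m}) : nat := (\dim <<enum S>>)%VS.

Definition orbitS (m : nat) (S : {set vec m}) : {set {set vec m}} :=
  [set [set x *m A | x in S] | A in [set A : 'M['F_2]_m | A \in unitmx]].

Definition chiSbar (R : rcfType) (m : nat) (eps : R) (S : {set vec m})
    (z : config m) : R :=
  \sum_(S' in orbitS S) chiS eps S' z.

(* Expanding the fourth power, <X_Sbar^4> is a sum over quadruples (S1, S2, S3, S4)
   of orbit elements of <X_S1 X_S2 X_S3 X_S4>.  The sites being independent, such a
   term is the product over x of the moments E[chi^c] of the one-site character,
   where c is the number of S_i containing x.  As E[chi] = 0, the term vanishes
   unless no point is covered exactly once, and otherwise each moment satisfies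
   E[chi^c]^4 <= (1/(eps(1-eps)))^c, so the term is at most
   (1/(eps(1-eps)))^(2^d) because |S_i| <= |S| <= 2^d.
   In a surviving quadruple every point of S1 lies in S2 or in span(S3 u S4), and
   symmetrically; a dimension count then puts all four spans inside a space spanned
   by 2d vectors.  There are 2^(2dm) choices of these vectors, and an orbit element
   inside a space W is the image of a basis of span S by d vectors of W, which
   leaves at most 2^(2d*d) of them for each S_i. *)

From HB Require Import structures.
From mathcomp Require Import all_boot all_order all_algebra finfield.
From mathcomp Require Import ring lra zify.
Import Order.TTheory GRing.Theory Num.Theory.
Local Open Scope ring_scope.
Set Implicit Arguments. Unset Strict Implicit. Unset Printing Implicit Defensive.

Section BernoulliExpectation.
Variables (R : rcfType) (m : nat) (eps : R).

Lemma bexp_sum (I : finType) (P : pred I) (F : I -> config m -> R) :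
  bexp eps (fun z => \sum_(i | P i) F i z) = \sum_(i | P i) bexp eps (F i).
Proof. by rewrite /bexp; under eq_bigr do rewrite mulr_sumr; exact: exchange_big. Qed.

Lemma card_vec : #|{: vec m}| = (2 ^ m)%N.
Proof. by rewrite card_mx card_Fp // mul1n. Qed.

Lemma bernoulli_weightE (z : config m) :
  eps ^+ hweight z * (1 - eps) ^+ (2 ^ m - hweight z)%N
  = \prod_x (if z x then eps else 1 - eps).
Proof.
rewrite (bigID (fun x => z x)) /=.
rewrite (eq_bigr (fun _ => eps)); last by move=> x ->.
rewrite [X in _ = _ * X](eq_bigr (fun _ => 1 - eps)); last by move=> x /negbTE ->.
rewrite !prodr_const -card_vec -(cardC [set x | z x]) addKn /hweight.
by congr (_ ^+ _ * _ ^+ _); apply: eq_card => x; rewrite !inE.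
Qed.

Lemma bexp_prod (F : vec m -> bool -> R) :
  bexp eps (fun z => \prod_x F x (z x))
  = \prod_x ((1 - eps) * F x false + eps * F x true).
Proof.
rewrite /bexp; under [LHS]eq_bigr do rewrite bernoulli_weightE -big_split.
rewrite -(bigA_distr_bigA (fun x b => (if b then eps else 1 - eps) * F x b)).
by apply: eq_bigr => x _; rewrite big_bool /= addrC.
Qed.

End BernoulliExpectation.

Definition multiplicity (I T : finType) (f : {ffun I -> {set T}}) (x : T) : nat :=
  \sum_i (x \in f i).

Definition multiplicity_ne1 (I T : finType) (f : {ffun I -> {set T}}) : bool :=
  [forall x, multiplicity f x != 1%N].

Section Multiplicity.
Variables (I T : finType) (f : {ffun I -> {set T}}).

Lemma sum_mem_card (A : {set T}) : (\sum_x (x \in A) = #|A|)%N.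
Proof. by rewrite -sum1_card [RHS]big_mkcond; apply: eq_bigr => x _; case: (x \in A). Qed.

Lemma sum_multiplicity : (\sum_x multiplicity f x = \sum_i #|f i|)%N.
Proof. by rewrite exchange_big; apply: eq_bigr => i _; exact: sum_mem_card. Qed.

Lemma multiplicity_le_card x : (multiplicity f x <= #|I|)%N.
Proof. by rewrite -sum1_card; apply: leq_sum => i _; exact: leq_b1. Qed.

Lemma multiplicity_ne1_cover x i :
  multiplicity_ne1 f -> x \in f i -> exists2 j, j != i & x \in f j.
Proof.
move=> /forallP/(_ x) + xi; rewrite /multiplicity (bigD1 i) //= xi add1n eqSS.
by rewrite sum_nat_eq0 => /forall_inPn[j ji]; rewrite eqb0 negbK; exists j.
Qed.

End Multiplicity.

Section SiteMoments.
Variables (R : rcfType) (m : nat) (eps : R).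
Hypotheses (eps_gt0 : 0 < eps) (eps_lt1 : eps < 1).

Let q := Num.sqrt (eps / (1 - eps)).
Let r := (1 - eps) / eps.
Let K := 1 / (eps * (1 - eps)).

Let eps_neq0 : eps != 0. Proof. by rewrite gt_eqF. Qed.
Let eps1_neq0 : 1 - eps != 0. Proof. by rewrite gt_eqF // subr_gt0. Qed.
Let eps_mul_gt0 : 0 < eps * (1 - eps). Proof. by rewrite mulr_gt0 // subr_gt0. Qed.

Lemma chiS_prod (S : {set vec m}) (z : config m) :
  chiS eps S z = \prod_x (q ^+ (x \in S) * (- r) ^+ ((x \in S) && z x)).
Proof.
rewrite big_split /= !prodrXr sum_mem_card; congr (_ * _ ^+ _).
by rewrite -sum_mem_card; apply: eq_bigr => x _; rewrite inE.
Qed.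

Lemma prod_chiS (I : finType) (f : {ffun I -> {set vec m}}) (z : config m) :
  \prod_i chiS eps (f i) z
  = \prod_x (q ^+ multiplicity f x * (- r) ^+ (multiplicity f x * z x)).
Proof.
under eq_bigr do rewrite chiS_prod.
rewrite exchange_big; apply: eq_bigr => x _ /=.
rewrite big_split /= !prodrXr big_distrl /=; congr (_ * _ ^+ _).
by apply: eq_bigr => i _; case: (z x); rewrite ?andbT ?andbF ?muln1 ?muln0.
Qed.

(* The [c]-th moment of the one-site character, which takes the value [q] at
   [z_x = 0] (probability [1 - eps]) and [- q * r] at [z_x = 1]. *)
Definition site_moment (c : nat) : R := q ^+ c * (1 - eps + eps * (- r) ^+ c).

Lemma bexp_prod_chiS (I : finType) (f : {ffun I -> {set vec m}}) :
  bexp eps (fun z => \prod_i chiS eps (f i) z)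
  = \prod_x site_moment (multiplicity f x).
Proof.
pose F x (b : bool) := q ^+ multiplicity f x * (- r) ^+ (multiplicity f x * b).
transitivity (bexp eps (fun z => \prod_x F x (z x))).
  by apply: eq_bigr => z _; rewrite prod_chiS.
rewrite bexp_prod; apply: eq_bigr => x _.
rewrite /F /site_moment muln0 muln1 expr0 mulr1 mulrDr.
by congr (_ + _); [exact: mulrC | exact: mulrCA].
Qed.

Lemma q_sqr : q ^+ 2 = eps / (1 - eps).
Proof. by rewrite sqr_sqrtr // divr_ge0 // ?subr_ge0 ltW. Qed.

Lemma inv_variance_ge1 : 1 <= K.
Proof. by rewrite /K ler_pdivlMr // mul1r; nra. Qed.

Lemma site_moment1 : site_moment 1 = 0.
Proof. by rewrite /site_moment /r expr1; field. Qed.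

Lemma site_moment2 : site_moment 2 = 1.
Proof. by rewrite /site_moment q_sqr /r; field; rewrite eps_neq0 eps1_neq0. Qed.

Lemma site_moment3_sqr : site_moment 3 ^+ 2 = K * (1 - 2 * eps) ^+ 2.
Proof.
rewrite /site_moment exprMn -exprM mulnC exprM q_sqr /r /K.
by field; rewrite eps_neq0 eps1_neq0.
Qed.

Lemma site_moment4 : site_moment 4 = K * (eps ^+ 3 + (1 - eps) ^+ 3).
Proof.
rewrite /site_moment (exprM _ 2 2) q_sqr /r /K.
by field; rewrite eps_neq0 eps1_neq0.
Qed.

Lemma site_moment_le c : (c <= 4)%N -> c != 1%N -> site_moment c ^+ 4 <= K ^+ c.
Proof.
have K0 : 0 <= K := le_trans ler01 inv_variance_ge1.
case: c => [|[|[|[|[|//]]]]] // _ _.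
- by rewrite /site_moment !expr0 mul1r mulr1 subrK expr1n.
- by rewrite site_moment2 expr1n exprn_ege1 // inv_variance_ge1.
- have s0 : 0 <= (1 - 2 * eps) ^+ 2 := sqr_ge0 _.
  have s1 : (1 - 2 * eps) ^+ 2 <= 1 by have := eps_mul_gt0; lra.
  rewrite (exprM _ 2 2) site_moment3_sqr.
  apply: (@le_trans _ _ (K ^+ 2)); last exact: (ler_weXn2l inv_variance_ge1).
  by apply: lerXn2r; rewrite ?nnegrE ?(mulr_ge0 K0 s0) ?(ler_piMr K0 s1).
- have s0 : 0 <= eps ^+ 3 + (1 - eps) ^+ 3.
    by rewrite addr_ge0 // exprn_ge0 // ?subr_ge0 ltW.
  have s1 : eps ^+ 3 + (1 - eps) ^+ 3 <= 1 by have := eps_mul_gt0; lra.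
  rewrite site_moment4; apply: lerXn2r;
    by rewrite ?nnegrE ?(mulr_ge0 K0 s0) ?(ler_piMr K0 s1).
Qed.

Lemma bexp_prod_chiS_eq0 (I : finType) (f : {ffun I -> {set vec m}}) :
  ~~ multiplicity_ne1 f -> bexp eps (fun z => \prod_i chiS eps (f i) z) = 0.
Proof.
rewrite negb_forall => /existsP[x /negPn/eqP fx1].
by rewrite bexp_prod_chiS (bigD1 x) //= fx1 site_moment1 mul0r.
Qed.

Lemma bexp_prod_chiS_le (I : finType) (f : {ffun I -> {set vec m}}) D :
  #|I| = 4%N -> (\sum_i #|f i| <= 4 * D)%N ->
  bexp eps (fun z => \prod_i chiS eps (f i) z) <= (multiplicity_ne1 f)%:R * K ^+ D.
Proof.
move=> card_I card_le.
have KD0 : 0 <= K ^+ D by rewrite exprn_ge0 // (le_trans ler01 inv_variance_ge1).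
case: (boolP (multiplicity_ne1 f)) => [ne1|/bexp_prod_chiS_eq0->]; last by rewrite mul0r.
rewrite mul1r bexp_prod_chiS.
have [T_le0|T_gt0] := leP (\prod_x site_moment (multiplicity f x)) 0.
  exact: le_trans T_le0 KD0.
rewrite -(ler_pXn2r (n := 4)) ?nnegrE ?(ltW T_gt0) // -prodrXl.
apply: (@le_trans _ _ (\prod_x K ^+ multiplicity f x)).
  apply: ler_prod => x _; rewrite exprn_even_ge0 //= site_moment_le ?(forallP ne1) //.
  by rewrite -card_I multiplicity_le_card.
rewrite prodrXr sum_multiplicity -exprM.
by apply: ler_weXn2l; [exact: inv_variance_ge1 | rewrite mulnC].
Qed.

End SiteMoments.

Section SpanDimension.
Variables (F : fieldType) (vT : vectType F).

Lemma span_subv_capv_add (X : seq vT) (V U : {vspace vT}) :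
  (forall x, x \in X -> (x \in V) || (x \in U)) ->
  (<<X>> <= <<X>> :&: V + <<X>> :&: U)%VS.
Proof.
move=> XVU; apply/span_subvP => x Xx; have xX : x \in <<X>>%VS := memv_span Xx.
case/orP: (XVU x Xx) => [xV|xU].
  by apply: (subvP (addvSl _ _)); rewrite memv_cap xX.
by apply: (subvP (addvSr _ _)); rewrite memv_cap xX.
Qed.

Lemma dim_addv_pair_le (V1 V2 U : {vspace vT}) d :
  (\dim V1 <= d)%N -> (\dim V2 <= d)%N ->
  (V1 <= V1 :&: V2 + V1 :&: U)%VS -> (V2 <= V1 :&: V2 + V2 :&: U)%VS ->
  (2 * \dim (V1 + V2) <= \dim ((V1 + V2) :&: U) + 2 * d)%N.
Proof.
set Z := (V1 :&: V2)%VS; set P := (V1 :&: U)%VS; set Q := (V2 :&: U)%VS.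
move=> dimV1 dimV2 /dimvS sV1 /dimvS sV2.
have /dimvS sPQ : (P + Q <= (V1 + V2) :&: U)%VS.
  by rewrite subv_add !subv_cap !capvSr !andbT !(subv_trans (capvSl _ _)) ?addvSl ?addvSr.
have /dimvS sPQZ : (P :&: Q <= Z :&: P)%VS.
  apply/subvP => x; rewrite !memv_cap => /andP[/andP[xV1 xU] /andP[xV2 _]].
  by rewrite xV1 xV2 xU.
have := dimv_sum_cap V1 V2; rewrite -/Z.
have := dimv_sum_cap Z P; have := dimv_sum_cap Z Q; have := dimv_sum_cap P Q.
lia.
Qed.

Lemma subv_span_ffun (U : {vspace vT}) n :
  (\dim U <= n)%N -> exists g : {ffun 'I_n -> vT}, (U <= <<codom g>>)%VS.
Proof.
move=> dimU; exists [ffun i : 'I_n => (vbasis U)`_i].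
rewrite -{1}(span_basis (vbasisP U)); apply: sub_span => v /(nthP 0)[i ltiU <-].
have ltin : (i < n)%N by apply: leq_trans ltiU _; rewrite size_tuple.
by have := codom_f [ffun i : 'I_n => (vbasis U)`_i] (Ordinal ltin); rewrite ffunE.
Qed.

End SpanDimension.

Lemma card_le_exp_dimS m (S : {set vec m}) : (#|S| <= 2 ^ dimS S)%N.
Proof.
have := card_vspace <<enum S>>%VS; rewrite card_Fp // => <-.
by apply/subset_leq_card/subsetP => x Sx; rewrite memv_span ?mem_enum.
Qed.

Section Orbit.
Variables (m : nat) (S : {set vec m}).
Let b := vbasis <<enum S>>.

Definition map_basis (g : {ffun 'I_(dimS S) -> vec m}) : {set vec m} :=
  [set \sum_(j < dimS S) coord b j x *: g j | x in S].

Lemma card_orbitS S' : S' \in orbitS S -> (#|S'| <= #|S|)%N.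
Proof. by case/imsetP=> A _ ->; exact: leq_imset_card. Qed.

Lemma memv_span_mulmx (A : 'M['F_2]_m) y : y \in <<enum S>>%VS ->
  y *m A \in <<enum [set x *m A | x in S]>>%VS.
Proof.
move=> /coord_span->; rewrite mulmx_suml; apply: rpred_sum => i _.
rewrite -scalemxAl; apply/rpredZ/memv_span; rewrite mem_enum.
by apply/imsetP; exists (enum_tuple S)`_i; rewrite // -mem_enum mem_nth ?size_tuple.
Qed.

Lemma orbitS_map_basis S' : S' \in orbitS S ->
  exists2 g, S' = map_basis g & forall j, g j \in <<enum S'>>%VS.
Proof.
case/imsetP=> A _ ->; exists [ffun j : 'I_(dimS S) => b`_j *m A] => [|j].
  apply: eq_in_imset => x Sx /=.
  have xS : x \in <<enum S>>%VS by rewrite memv_span ?mem_enum.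
  rewrite {1}(coord_vbasis xS) mulmx_suml; apply: eq_bigr => j _.
  by rewrite ffunE scalemxAl.
by rewrite ffunE memv_span_mulmx // vbasis_mem ?mem_nth ?size_tuple.
Qed.

Lemma map_basis_subv g : (<<enum (map_basis g)>> <= <<codom g>>)%VS.
Proof.
apply/span_subvP => y; rewrite mem_enum => /imsetP[x _ ->].
by apply: rpred_sum => j _; rewrite rpredZ // memv_span ?codom_f.
Qed.

Lemma dim_orbitS S' : S' \in orbitS S -> (\dim <<enum S'>> <= dimS S)%N.
Proof.
case/orbitS_map_basis=> g -> _; apply: leq_trans (dimvS (map_basis_subv g)) _.
by apply: leq_trans (dim_span _) _; rewrite size_codom card_ord.
Qed.

Lemma card_orbitS_subv (W : {vspace vec m}) :
  (#|[set S' in orbitS S | (<<enum S'>> <= W)%VS]| <= 2 ^ (\dim W * dimS S))%N.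
Proof.
apply: (@leq_trans #|[set map_basis g | g in ffun_on W]|).
  apply/subset_leq_card/subsetP => S' /[!inE] /andP[/orbitS_map_basis[g eS' gS'] sW].
  by rewrite eS' imset_f //; apply/ffun_onP => j; exact: subvP sW _ (gS' j).
apply: leq_trans (leq_imset_card _ _) _.
by rewrite card_ffun_on card_vspace card_Fp // card_ord -expnM.
Qed.

End Orbit.

(* Quadruples of sets are indexed by [bool * bool], so that [(a, b)] and
   [(a, ~~ b)] form the two pairs of the dimension count. *)
Lemma multiplicity_ne1_span m (f : {ffun bool * bool -> {set vec m}}) d :
  (forall i, \dim <<enum (f i)>> <= d)%N -> multiplicity_ne1 f ->
  exists g : {ffun 'I_(2 * d) -> vec m}, forall i, (<<enum (f i)>> <= <<codom g>>)%VS.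
Proof.
move=> dimV ne1; pose V i := <<enum (f i)>>%VS.
pose W a := (V (a, true) + V (a, false))%VS.
have VW a b : (V (a, b) <= W a)%VS by case: b; rewrite ?addvSl ?addvSr.
have V_cover a b : (V (a, b) <= V (a, b) :&: V (a, ~~ b) + V (a, b) :&: W (~~ a))%VS.
  apply: span_subv_capv_add => x; rewrite mem_enum => xf.
  have [[a' b'] neq] := multiplicity_ne1_cover ne1 xf; clear xf.
  rewrite -mem_enum => /memv_span xV.
  case: (eqVneq a' a) => [ea|nea].
    by move: neq xV; rewrite ea xpair_eqE eqxx; case: b b' => -[] //= _ ->.
  by move: nea neq xV; case: a a' => -[] // _ _ /(subvP (VW _ _)) ->; rewrite orbT.
have dimW a : (2 * \dim (W a) <= \dim (W a :&: W (~~ a)) + 2 * d)%N.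
  apply: dim_addv_pair_le; rewrite ?dimV ?V_cover //.
  by rewrite [(V (a, true) :&: _)%VS]capvC V_cover.
have dimWW : (\dim (W true + W false) <= 2 * d)%N.
  have := dimW true; have := dimW false; rewrite /= capvC.
  by have := dimv_sum_cap (W true) (W false); lia.
have [g sg] := subv_span_ffun dimWW; exists g => -[a b].
by apply: subv_trans sg; apply: subv_trans (VW a b) _; case: a; rewrite ?addvSl ?addvSr.
Qed.

Lemma card_multiplicity_ne1 m (S : {set vec m}) :
  (\sum_(f : {ffun bool * bool -> {set vec m}} | f \in ffun_on (orbitS S))
     multiplicity_ne1 f <= 2 ^ (2 * dimS S * m + 8 * dimS S ^ 2))%N.
Proof.
set d := dimS S.
pose inW (g : {ffun 'I_(2 * d) -> vec m}) (S' : {set vec m}) : nat :=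
  (<<enum S'>> <= <<codom g>>)%VS.
apply: (@leq_trans (\sum_(f in ffun_on (orbitS S)) \sum_g \prod_i inW g (f i))).
  apply: leq_sum => f /ffun_onP fO; case ne1: (multiplicity_ne1 f) => //.
  have [g fg] := multiplicity_ne1_span (fun i => dim_orbitS (fO i)) ne1.
  by rewrite (bigD1 g) //= big1 ?leq_addr // => i _; rewrite /inW fg.
rewrite exchange_big /=.
apply: (@leq_trans (\sum_(g : {ffun 'I_(2 * d) -> vec m}) (2 ^ (2 * d * d)) ^ 4)).
  apply: leq_sum => g _.
  have -> : (\sum_(f : {ffun bool * bool -> _} | f \in ffun_on (orbitS S))
               \prod_i inW g (f i)
             = \prod_(i : bool * bool) \sum_(S' in orbitS S) inW g S')%N.
    by rewrite bigA_distr_big.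
  rewrite prod_nat_const card_prod card_bool leq_exp2r //.
  have -> : (\sum_(S' in orbitS S) inW g S'
             = #|[set S' in orbitS S | (<<enum S'>> <= <<codom g>>)%VS]|)%N.
    rewrite -sum1_card big_mkcond [RHS]big_mkcond; apply: eq_bigr => S' _.
    by rewrite inE; case: (S' \in _).
  apply: leq_trans (card_orbitS_subv S _) _; rewrite leq_exp2l // leq_mul2r.
  by rewrite (leq_trans (dim_span _)) ?orbT // size_codom card_ord.
rewrite sum_nat_const card_ffun card_vec card_ord -!expnM -expnD leq_exp2l //.
lia.
Qed.

Theorem lemma5 (R : rcfType) (m : nat) (S : {set 'rV['F_2]_m}) (eps : R) :
  (0 < m)%N -> 0 < eps -> eps < 1 / 2 ->
  bexp eps (fun z => chiSbar eps S z ^+ 4)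
    <= 2 ^+ (2 * dimS S * m + 8 * dimS S ^ 2)%N
       * (1 / (eps * (1 - eps))) ^+ (2 ^ dimS S)%N.
Proof.
move=> _ eps_gt0 eps_lt_half.
have eps_lt1 : eps < 1.
  by apply: lt_trans eps_lt_half _; rewrite ltr_pdivrMr // mul1r ltr1n.
set K := 1 / (eps * (1 - eps)).
have card4 : #|{: bool * bool}| = 4%N by rewrite card_prod card_bool.
have -> : bexp eps (fun z => chiSbar eps S z ^+ 4)
    = \sum_(f : {ffun bool * bool -> _} | f \in ffun_on (orbitS S))
        bexp eps (fun z => \prod_i chiS eps (f i) z).
  rewrite -bexp_sum; apply: eq_bigr => z _; congr (_ * _).
  by rewrite /chiSbar -card4 -prodr_const bigA_distr_big.
apply: (@le_trans _ _ (\sum_(f : {ffun bool * bool -> _} | f \in ffun_on (orbitS S))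
                          (multiplicity_ne1 f)%:R * K ^+ (2 ^ dimS S))).
  apply: ler_sum => f /ffun_onP f_orbit; apply: bexp_prod_chiS_le => //.
  rewrite -card4 -sum_nat_const; apply: leq_sum => i _.
  exact: leq_trans (card_orbitS (f_orbit i)) (card_le_exp_dimS S).
rewrite -mulr_suml -natr_sum; apply: ler_wpM2r.
  by rewrite exprn_ge0 // divr_ge0 // mulr_ge0 ?subr_ge0 ?ltW.
by rewrite -natrX ler_nat card_multiplicity_ne1.
Qed.
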